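(* Let $q\ge2$, $N=2^q$, $b>0$, $h=b/N$, and let $A_q=h^2B_h$, where $B_h=(b_{i,j})_{i,j=1}^{N-1}$ is the symmetric Toeplitz matrix with $b_{i,i}=\frac{2N}3-1$, $b_{i,j}=\frac N6-1$ if $|i-j|=1$, and $b_{i,j}=-1$ if $|i-j|\ge2$. Let $D_q$ be the diagonal of $A_q$, let $\eta_0$ satisfy $\lambda_{\max}(D_q^{-1}A_q)\le\eta_0<3$, let $0<\omega<2/\eta_0$, let $0<\eta\le\omega(2-\omega\eta_0)$, and let $K_q=I-\omega D_q^{-1}A_q$. Then $\|K_q\nu\|_{A_q}^2\le\|\nu\|_{A_q}^2-\eta\|A_q\nu\|_{D_q^{-1}}^2$ for all $\nu\in\mathbb R^{N-1}$, and $$\|K_qT^q\|_{A_q}\le\sqrt{1-\eta/4}<1.$$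
   Context: For a symmetric positive definite $M$, $\|\nu\|_M=\sqrt{\nu^TM\nu}$ and for a matrix $X$, $\|X\|_M$ is the induced operator norm. The restriction $I_q^{q-1}:\mathbb R^{N-1}\to\mathbb R^{N/2-1}$ is $(I_q^{q-1}\nu)_i=\frac14(\nu_{2i-1}+2\nu_{2i}+\nu_{2i+1})$, the prolongation is $I_{q-1}^q=2(I_q^{q-1})^T$, the coarse matrix is $A_{q-1}=I_q^{q-1}A_qI_{q-1}^q$, and $T^q=I-I_{q-1}^qA_{q-1}^{-1}I_q^{q-1}A_q$. $K_q$ is the damped Jacobi iteration matrix and $K_qT^q$ the two-grid iteration matrix. $A_q$ is the piecewise linear finite element stiffness matrix of the nonlocal operator $u\mapsto\int_0^b[u(x)-u(y)]dy$ with zero exterior condition. *)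

From HB Require Import structures.
From mathcomp Require Import all_boot all_order all_algebra.
From mathcomp Require Import boolp classical_sets reals.
Set Implicit Arguments. Unset Strict Implicit. Unset Printing Implicit Defensive.
Import Order.TTheory GRing.Theory Num.Theory.
Local Open Scope ring_scope.
Local Open Scope classical_set_scope.

(* Indices i : 'I_n are 0-based: paper index = i + 1. *)

Section Defs.
Variable R : realType.

Definition mnorm n (M : 'M[R]_n) (v : 'cV[R]_n) : R :=
  Num.sqrt ((v^T *m M *m v) 0 0).

Definition opnorm n (M X : 'M[R]_n) : R :=
  sup [set r | exists v : 'cV[R]_n, v != 0 /\ r = mnorm M (X *m v) / mnorm M v].

Definition Bh (q : nat) : 'M[R]_(2 ^ q - 1) :=
  let N : R := (2 ^ q)%:R in
  \matrix_(i, j) (if i == j then 2 * N / 3 - 1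
                  else if (i.+1 == j :> nat) || (j.+1 == i :> nat) then N / 6 - 1
                  else -1).

Definition Aq (q : nat) (b : R) : 'M[R]_(2 ^ q - 1) :=
  (b / (2 ^ q)%:R) ^+ 2 *: Bh q.

Definition diagpart n (A : 'M[R]_n) : 'M[R]_n := \matrix_(i, j) (if i == j then A i j else 0).

(* restriction I_q^{q-1} : R^{N-1} -> R^{N/2-1},
   (I nu)_i = 1/4 (nu_{2i-1} + 2 nu_{2i} + nu_{2i+1}) (1-based) *)
Definition restr (q : nat) : 'M[R]_(2 ^ q.-1 - 1, 2 ^ q - 1) :=
  \matrix_(i, j) (if (j == (2 * i)%N :> nat) then 1 / 4
                  else if (j == (2 * i).+1 :> nat) then 1 / 2
                  else if (j == (2 * i).+2 :> nat) then 1 / 4 else 0).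

Definition prol (q : nat) : 'M[R]_(2 ^ q - 1, 2 ^ q.-1 - 1) := 2 *: (restr q)^T.

Definition Acoarse (q : nat) (b : R) : 'M[R]_(2 ^ q.-1 - 1) :=
  restr q *m Aq q b *m prol q.

Definition Tq (q : nat) (b : R) : 'M[R]_(2 ^ q - 1) :=
  1%:M - prol q *m invmx (Acoarse q b) *m restr q *m Aq q b.

Definition Kq (q : nat) (b omega : R) : 'M[R]_(2 ^ q - 1) :=
  1%:M - omega *: (invmx (diagpart (Aq q b)) *m Aq q b).

End Defs.

(* The damped Jacobi smoother K satisfies the smoothing property
   |K v|_A^2 <= |v|_A^2 - eta |A v|_(D^-1)^2, since D = d I and lambda_max (D^-1 A) <= eta0
   bound the Rayleigh quotient of A by eta0 d.  The Galerkin coarse-grid correction T is the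
   A-orthogonal projection along the range of the prolongation P, so it does not increase the
   energy norm, and the error T v it leaves satisfies |T v|_A^2 <= 4 |A T v|_(D^-1)^2 by
   Galerkin orthogonality and Cauchy-Schwarz, as soon as every e admits a coarse c with
   d |e - P c|^2 <= 4 |e|_A^2.  Chaining the two gives
   |K T v|_A^2 <= (1 - eta/4) |T v|_A^2 <= (1 - eta/4) |v|_A^2.
   For the model problem B_h = (N/6) tridiag(1,4,1) - 1 1^T, so e^T B_h e is N^2 times the
   squared L^2 distance of the piecewise linear interpolant of e (extended by zero) from its
   mean.  Choosing c as the values of e at the coarse nodes leaves, at every other fine node,
   the deviation from the midpoint of its neighbours, and the sum of their squares is at most
   twice that distance. *)

From HB Require Import structures.
From mathcomp Require Import all_boot all_order all_algebra.
From mathcomp Require Import boolp classical_sets reals.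
From mathcomp Require Import ring lra zify.
Set Implicit Arguments. Unset Strict Implicit. Unset Printing Implicit Defensive.
Import Order.TTheory GRing.Theory Num.Theory.
Local Open Scope ring_scope.

Section BilinearForm.
Variable R : comNzRingType.

Definition bform p n (M : 'M[R]_(p, n)) (u : 'cV[R]_p) (v : 'cV[R]_n) : R :=
  (u^T *m M *m v) 0 0.

Variables p n : nat.
Implicit Types (M : 'M[R]_(p, n)) (u : 'cV[R]_p) (v : 'cV[R]_n).

Lemma bformE M u v : bform M u v = \sum_i \sum_j u i 0 * M i j * v j 0.
Proof.
rewrite /bform mxE exchange_big; apply: eq_bigr => j _.
by rewrite mxE mulr_suml; apply: eq_bigr => i _; rewrite !mxE.
Qed.

Lemma bformDl M u1 u2 v : bform M (u1 + u2) v = bform M u1 v + bform M u2 v.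
Proof. by rewrite /bform linearD /= !mulmxDl mxE. Qed.

Lemma bformDr M u v1 v2 : bform M u (v1 + v2) = bform M u v1 + bform M u v2.
Proof. by rewrite /bform mulmxDr mxE. Qed.

Lemma bformZl M a u v : bform M (a *: u) v = a * bform M u v.
Proof. by rewrite /bform linearZ /= -!scalemxAl mxE. Qed.

Lemma bformZr M a u v : bform M u (a *: v) = a * bform M u v.
Proof. by rewrite /bform -scalemxAr mxE. Qed.

Lemma bformBl M u1 u2 v : bform M (u1 - u2) v = bform M u1 v - bform M u2 v.
Proof. by rewrite bformDl -scaleN1r bformZl mulN1r. Qed.

Lemma bformBr M u v1 v2 : bform M u (v1 - v2) = bform M u v1 - bform M u v2.
Proof. by rewrite bformDr -scaleN1r bformZr mulN1r. Qed.

Lemma bform0l M v : bform M 0 v = 0.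
Proof. by rewrite /bform linear0 !mul0mx mxE. Qed.

Lemma bformBM (M1 M2 : 'M[R]_(p, n)) u v :
  bform (M1 - M2) u v = bform M1 u v - bform M2 u v.
Proof. by rewrite /bform mulmxBr mulmxBl !mxE. Qed.

Lemma bformZM a M u v : bform (a *: M) u v = a * bform M u v.
Proof. by rewrite /bform -scalemxAr -scalemxAl mxE. Qed.

Lemma bform_mulmxr k M (N : 'M[R]_(n, k)) u w : bform M u (N *m w) = bform (M *m N) u w.
Proof. by rewrite /bform !mulmxA. Qed.

Lemma bform_mulmxl k M (N : 'M[R]_(p, k)) w v : bform M (N *m w) v = bform (N^T *m M) w v.
Proof. by rewrite /bform trmx_mul !mulmxA. Qed.

End BilinearForm.

Lemma bform_sym (R : comNzRingType) n (M : 'M[R]_n) u v :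
  M^T = M -> bform M u v = bform M v u.
Proof.
move=> sM; rewrite /bform.
have <- : (u^T *m M *m v)^T = v^T *m M *m u by rewrite !trmx_mul trmxK sM mulmxA.
by rewrite [RHS]mxE.
Qed.

Lemma bform_scalar (R : comNzRingType) n a (u v : 'cV[R]_n) :
  bform a%:M u v = a * bform 1%:M u v.
Proof. by rewrite -bformZM scalemx1. Qed.

Lemma const_mx1_neq0 (R : nzRingType) n : (0 < n)%N -> const_mx 1 != 0 :> 'cV[R]_n.
Proof.
move=> n_gt0; apply/eqP => /matrixP /(_ (Ordinal n_gt0) 0).
by rewrite !mxE => /eqP; rewrite oner_eq0.
Qed.

Section EuclideanNorm.
Variables (R : realFieldType) (n : nat).
Implicit Types u v : 'cV[R]_n.

Lemma bform1E u v : bform 1%:M u v = \sum_i u i 0 * v i 0.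
Proof. by rewrite /bform mulmx1 mxE; apply: eq_bigr => i _; rewrite mxE. Qed.

Lemma bform1_ge0 v : 0 <= bform 1%:M v v.
Proof. by rewrite bform1E; apply: sumr_ge0 => i _; rewrite -expr2 sqr_ge0. Qed.

Lemma sqr_entry_le_bform1 v i : v i 0 ^+ 2 <= bform 1%:M v v.
Proof.
rewrite bform1E (bigD1 i) //= -expr2 lerDl.
by apply: sumr_ge0 => j _; rewrite -expr2 sqr_ge0.
Qed.

Lemma bform1_gt0 v : v != 0 -> 0 < bform 1%:M v v.
Proof.
apply: contraNT; rewrite -leNgt => v_le0; apply/eqP/matrixP => i j.
rewrite (ord1 j) mxE; apply/eqP; rewrite -sqrf_eq0 eq_le sqr_ge0 andbT.
exact: le_trans (sqr_entry_le_bform1 v i) v_le0.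
Qed.

Lemma bform_le_bform1 (M : 'M[R]_n) :
  exists C, forall v, bform M v v <= C * bform 1%:M v v.
Proof.
exists (\sum_i \sum_j `|M i j|) => v; rewrite bformE mulr_suml.
apply: ler_sum => i _; rewrite mulr_suml; apply: ler_sum => j _.
have vij : `|v i 0| * `|v j 0| <= bform 1%:M v v.
  have := sqr_entry_le_bform1 v i; have := sqr_entry_le_bform1 v j.
  rewrite -[v i 0 ^+ 2]real_normK ?num_real // -[v j 0 ^+ 2]real_normK ?num_real //.
  have := sqr_ge0 (`|v i 0| - `|v j 0|); lra.
rewrite mulrAC -mulrA (le_trans (ler_norm _)) // !normrM.
by rewrite mulrA mulrC ler_wpM2l.
Qed.

End EuclideanNorm.

Section Rayleigh.
Variables (R : realType) (n : nat).
Implicit Types (M : 'M[R]_n) (v : 'cV[R]_n).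

Lemma psd_unitmx_coercive M :
  M^T = M -> (forall v, 0 <= bform M v v) -> M \in unitmx ->
  exists2 C, 0 < C & forall v, bform 1%:M v v <= C * bform M v v.
Proof.
move=> sM psdM uM; have [C0 leC0] := bform_le_bform1 (invmx M).
pose C := Num.max C0 1; have C_gt0 : 0 < C by rewrite lt_max ltr01 orbT.
exists C => // x; pose y := invmx M *m x.
have Mxy : bform M x y = bform 1%:M x x by rewrite bform_mulmxr mulmxV.
have Myy : bform M y y = bform (invmx M) x x.
  by rewrite [in LHS]bform_mulmxr mulmxV // bform_sym ?trmx1 // bform_mulmxr mul1mx.
have := psdM (y - C *: x).
rewrite !(bformBl, bformBr, bformZl, bformZr) (bform_sym y x) // Mxy Myy.
have x0 := bform1_ge0 x; have := leC0 x.
have : C0 * bform 1%:M x x <= C * bform 1%:M x x by rewrite ler_wpM2r ?le_max ?lexx.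
nra.
Qed.

Lemma sym_rayleigh_eigenvalue M : (0 < n)%N -> M^T = M ->
  exists2 lam, eigenvalue M lam & forall v, bform M v v <= lam * bform 1%:M v v.
Proof.
move=> n_gt0 sM.
pose E := [set bform M v v / bform 1%:M v v | v in [set v | v != 0]]%classic.
have [C leC] := bform_le_bform1 M.
have ubE : has_ubound E.
  by exists C => _ [v /= v0 <-]; rewrite ler_pdivrMr ?bform1_gt0.
have E0 : (E !=set0)%classic.
  by eexists; exists (const_mx 1); first exact: const_mx1_neq0.
pose lam := sup E.
have le_lam v : bform M v v <= lam * bform 1%:M v v.
  have [->|v0] := eqVneq v 0; first by rewrite !bform0l mulr0.
  by rewrite -ler_pdivrMr ?bform1_gt0 //; apply: ub_le_sup => //; exists v.
exists lam => //.
(* Were lam I - M invertible, it would be coercive and lam - 1/C' would still bound E. *)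
pose N := lam%:M - M.
have N_psd v : 0 <= bform N v v by rewrite bformBM bform_scalar subr_ge0.
have : N \notin unitmx.
  apply/negP => /(psd_unitmx_coercive _ N_psd) [| C' C'_gt0 leC'].
    by rewrite linearB /= tr_scalar_mx sM.
  suff : lam <= lam - C'^-1 by rewrite -invr_gt0 in C'_gt0; lra.
  apply: ge_sup => // _ [v /= v0 <-]; rewrite ler_pdivrMr ?bform1_gt0 //.
  have := leC' v; rewrite /N bformBM (bform_scalar lam) => h.
  rewrite -ler_pdivrMl // in h.
  rewrite mulrBl; lra.
rewrite unitmxE unitfE negbK => /det0P [v v0 vN].
apply/eigenvalueP; exists v => //.
by move: vN; rewrite mulmxBr mul_mx_scalar => /eqP; rewrite subr_eq0 => /eqP.
Qed.

End Rayleigh.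

Section JacobiSmoothing.
Variables (R : realType) (n : nat) (A : 'M[R]_n) (d eta0 omega eta : R).
Hypothesis n_gt0 : (0 < n)%N.
Hypothesis A_sym : A^T = A.
Hypothesis d_gt0 : 0 < d.
Hypothesis diagA : diagpart A = d%:M.
Hypothesis eigen_le :
  forall lam, eigenvalue (invmx (diagpart A) *m A) lam -> lam <= eta0.
Hypothesis omega_gt0 : 0 < omega.
Hypothesis eta_le : eta <= omega * (2 - omega * eta0).

Lemma invmx_diagA : invmx (diagpart A) = d^-1%:M.
Proof. by rewrite diagA invmx_scalar. Qed.

Lemma bform_le_eta0 w : bform A w w <= eta0 * d * bform 1%:M w w.
Proof.
have [lam eig_lam le_lam] := sym_rayleigh_eigenvalue n_gt0 A_sym.
apply: le_trans (le_lam w) _; rewrite ler_wpM2r ?bform1_ge0 // -ler_pdivrMr //.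
apply: eigen_le; apply/eigenvalueP; move/eigenvalueP: eig_lam => [v vA v0].
by exists v => //; rewrite invmx_diagA mul_scalar_mx -scalemxAr vA scalerA mulrC.
Qed.

Lemma one_le_eta0 : 1 <= eta0.
Proof.
pose e : 'cV[R]_n := delta_mx (Ordinal n_gt0) 0.
have e1 : bform 1%:M e e = 1 by rewrite /bform mulmx1 trmx_delta mul_delta_mx mxE !eqxx.
have eA : bform A e e = d.
  rewrite /bform trmx_delta -rowE -colE !mxE.
  by have := congr1 (fun M : 'M_n => M (Ordinal n_gt0) (Ordinal n_gt0)) diagA; rewrite !mxE eqxx.
by have := bform_le_eta0 e; rewrite e1 eA mulr1 -[X in X <= _]mul1r ler_pM2r.
Qed.

Lemma eta_le1 : eta <= 1.
Proof.
have := eta_le; set X := omega * (2 - omega * eta0).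
have eta0X : eta0 * X = 1 - (omega * eta0 - 1) ^+ 2 by rewrite /X; ring.
have := sqr_ge0 (omega * eta0 - 1); have := one_le_eta0 => eta0_ge1.
have [X_ge0 | X_lt0] := lerP 0 X; last lra.
have : 0 <= (eta0 - 1) * X by rewrite mulr_ge0 // subr_ge0.
lra.
Qed.

Lemma jacobi_smoothing v :
  bform A ((1%:M - omega *: (invmx (diagpart A) *m A)) *m v)
          ((1%:M - omega *: (invmx (diagpart A) *m A)) *m v)
  <= bform A v v - eta * (d^-1 * bform 1%:M (A *m v) (A *m v)).
Proof.
set w := A *m v; set t := omega / d.
have -> : (1%:M - omega *: (invmx (diagpart A) *m A)) *m v = v - t *: w.
  by rewrite mulmxBl mul1mx invmx_diagA mul_scalar_mx -!scalemxAl scalerA.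
have Avw : bform A v w = bform 1%:M w w by rewrite bform_mulmxl mulmx1 A_sym.
rewrite !(bformBl, bformBr, bformZl, bformZr) (bform_sym w v) // Avw.
have t_ge0 : 0 <= t by rewrite divr_ge0 // ltW.
set W := bform 1%:M w w; set Wd := d^-1 * W.
have Wd_ge0 : 0 <= Wd by rewrite mulr_ge0 ?bform1_ge0 // invr_ge0 ltW.
have tW : t * W = omega * Wd by rewrite mulrA.
have ttAw : t * (t * bform A w w) <= omega * (omega * eta0) * Wd.
  have -> : omega * (omega * eta0) * Wd = t * (t * (eta0 * d * W)).
    by rewrite /t /Wd; field; rewrite gt_eqF.
  by rewrite !ler_wpM2l // bform_le_eta0.
have : eta * Wd <= omega * (2 - omega * eta0) * Wd by rewrite ler_wpM2r.
lra.
Qed.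

End JacobiSmoothing.

Lemma bform1_le_of_approx (R : realFieldType) n (r y : 'cV[R]_n) d :
  0 < d -> d * bform 1%:M r r <= 4 * bform 1%:M r y ->
  bform 1%:M r y <= 4 / d * bform 1%:M y y.
Proof.
move=> d_gt0 approx; have := bform1_ge0 ((d / 4) *: r - y).
rewrite !(bformBl, bformBr, bformZl, bformZr) (bform_sym y r) ?trmx1 // => h.
rewrite mulrAC ler_pdivlMr //.
have : 0 <= d / 16 * (4 * bform 1%:M r y - d * bform 1%:M r r).
  by apply: mulr_ge0; [rewrite divr_ge0 // ltW | lra].
have E : d / 4 * (d / 4 * bform 1%:M r r) = d / 16 * (d * bform 1%:M r r) by field.
lra.
Qed.

Section CoarseGridCorrection.
Variables (R : realType) (n m : nat) (A : 'M[R]_n) (Rm : 'M[R]_(m, n)).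
Hypothesis A_sym : A^T = A.
Hypothesis A_psd : forall v, 0 <= bform A v v.
Hypothesis A_definite : forall v, bform A v v = 0 -> v = 0.
Let P := 2 *: Rm^T.
Hypothesis P_inj : forall c : 'cV[R]_m, P *m c = 0 -> c = 0.
Let T := 1%:M - P *m invmx (Rm *m A *m P) *m Rm *m A.

Lemma trmx_P : P^T = 2 *: Rm.
Proof. by apply/matrixP => i j; rewrite !mxE. Qed.

Lemma coarse_unitmx : Rm *m A *m P \in unitmx.
Proof.
rewrite unitmxE unitfE; apply/negP => /det0P [c c0 cAc].
suff : P *m c^T = 0 by move/P_inj/(congr1 trmx); rewrite trmxK trmx0; apply/eqP.
apply: A_definite; rewrite bform_mulmxl bform_mulmxr trmx_P -!scalemxAl bformZM.
by rewrite /bform trmxK cAc mul0mx mxE mulr0.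
Qed.

Lemma coarse_AT : Rm *m A *m T = 0.
Proof.
by rewrite /T mulmxBr mulmx1 !mulmxA mulmxV ?mul1mx ?subrr // coarse_unitmx.
Qed.

Lemma galerkin_orthogonality c v : bform A (P *m c) (T *m v) = 0.
Proof.
rewrite bform_mulmxl bform_mulmxr trmx_P -!scalemxAl coarse_AT.
by rewrite scaler0 /bform mulmx0 mul0mx mxE.
Qed.

Lemma coarse_correction_le v : bform A (T *m v) (T *m v) <= bform A v v.
Proof.
set z := invmx (Rm *m A *m P) *m Rm *m A *m v.
have -> : bform A v v = bform A (T *m v + P *m z) (T *m v + P *m z).
  by rewrite /T mulmxBl mul1mx !mulmxA subrK.
rewrite bformDl !bformDr galerkin_orthogonality (bform_sym (T *m v)) //.
by rewrite galerkin_orthogonality addr0 add0r lerDl A_psd.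
Qed.

Lemma coarse_correction_approx d v : 0 < d ->
  (exists c, d * bform 1%:M (T *m v - P *m c) (T *m v - P *m c)
             <= 4 * bform A (T *m v) (T *m v)) ->
  bform A (T *m v) (T *m v) <= 4 / d * bform 1%:M (A *m (T *m v)) (A *m (T *m v)).
Proof.
move=> d_gt0 [c approx].
have E : bform A (T *m v) (T *m v) = bform 1%:M (T *m v - P *m c) (A *m (T *m v)).
  by rewrite [RHS]bform_mulmxr mul1mx bformBl galerkin_orthogonality subr0.
by rewrite E; apply: bform1_le_of_approx; rewrite // -E.
Qed.

End CoarseGridCorrection.

Section OperatorNorm.
Variables (R : realType) (n : nat) (M : 'M[R]_n).
Hypothesis M_psd : forall v, 0 <= bform M v v.

Lemma mnormE v : mnorm M v = Num.sqrt (bform M v v).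
Proof. by []. Qed.

Lemma sqr_mnorm v : mnorm M v ^+ 2 = bform M v v.
Proof. by rewrite mnormE sqr_sqrtr. Qed.

Lemma opnorm_le_sqrt (X : 'M[R]_n) c : (0 < n)%N ->
  (forall v, bform M (X *m v) (X *m v) <= c * bform M v v) ->
  opnorm M X <= Num.sqrt c.
Proof.
move=> n_gt0 leX; apply: ge_sup.
  by eexists; exists (const_mx 1); split; first exact: const_mx1_neq0.
move=> _ [v [_ ->]]; rewrite !mnormE.
have [v0 | v_gt0] := eqVneq (bform M v v) 0; first by rewrite v0 sqrtr0 invr0 mulr0 sqrtr_ge0.
have {}v_gt0 : 0 < bform M v v by rewrite lt_def v_gt0 M_psd.
have c_ge0 : 0 <= c.
  by rewrite -(pmulr_lge0 _ v_gt0) (le_trans (M_psd (X *m v))) ?leX.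
rewrite ler_pdivrMr ?sqrtr_gt0 // -sqrtrM // ler_sqrt ?leX //.
by rewrite mulr_ge0 // ltW.
Qed.

End OperatorNorm.

Section TwoGrid.
Variables (R : realType) (n m : nat) (A : 'M[R]_n) (Rm : 'M[R]_(m, n)).
Variables (d eta0 omega eta : R).
Hypothesis n_gt0 : (0 < n)%N.
Hypothesis A_sym : A^T = A.
Hypothesis A_psd : forall v, 0 <= bform A v v.
Hypothesis A_definite : forall v, bform A v v = 0 -> v = 0.
Hypothesis d_gt0 : 0 < d.
Hypothesis diagA : diagpart A = d%:M.
Hypothesis eigen_le :
  forall lam, eigenvalue (invmx (diagpart A) *m A) lam -> lam <= eta0.
Hypothesis omega_gt0 : 0 < omega.
Hypothesis eta_gt0 : 0 < eta.
Hypothesis eta_le : eta <= omega * (2 - omega * eta0).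
Let P := 2 *: Rm^T.
Hypothesis P_inj : forall c : 'cV[R]_m, P *m c = 0 -> c = 0.
Hypothesis approximation : forall e : 'cV[R]_n,
  exists c, d * bform 1%:M (e - P *m c) (e - P *m c) <= 4 * bform A e e.
Let K := 1%:M - omega *: (invmx (diagpart A) *m A).
Let T := 1%:M - P *m invmx (Rm *m A *m P) *m Rm *m A.

Lemma two_grid_contraction v :
  bform A (K *m (T *m v)) (K *m (T *m v)) <= (1 - eta / 4) * bform A v v.
Proof.
set a := bform A (T *m v) (T *m v).
set W := d^-1 * bform 1%:M (A *m (T *m v)) (A *m (T *m v)).
have smooth : bform A (K *m (T *m v)) (K *m (T *m v)) <= a - eta * W.
  exact: (jacobi_smoothing (eta0 := eta0)).
have approx : a <= 4 * W.
  by rewrite /W mulrA; apply: coarse_correction_approx.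
have contract : a <= bform A v v by apply: coarse_correction_le.
have eta_le1 : eta <= 1 by apply: (eta_le1 (A := A) (d := d) (eta0 := eta0) (omega := omega)).
have : eta * a <= 4 * (eta * W) by rewrite mulrCA ler_wpM2l // ltW.
have : (1 - eta / 4) * a <= (1 - eta / 4) * bform A v v by rewrite ler_wpM2l //; lra.
lra.
Qed.

Lemma two_grid_convergence :
  (forall v, mnorm A (K *m v) ^+ 2
             <= mnorm A v ^+ 2 - eta * mnorm (invmx (diagpart A)) (A *m v) ^+ 2)
  /\ opnorm A (K *m T) <= Num.sqrt (1 - eta / 4)
  /\ Num.sqrt (1 - eta / 4) < 1.
Proof.
split=> [v|].
  have D_psd w : 0 <= bform (invmx (diagpart A)) w w.
    by rewrite (invmx_diagA diagA) bform_scalar mulr_ge0 ?bform1_ge0 // invr_ge0 ltW.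
  rewrite !sqr_mnorm // (invmx_diagA diagA) bform_scalar.
  exact: (jacobi_smoothing (eta0 := eta0)).
split; last by rewrite -[X in _ < X]sqrtr1 ltr_sqrt // gtrBl divr_gt0.
by apply: opnorm_le_sqrt => // v; rewrite -mulmxA two_grid_contraction.
Qed.

End TwoGrid.

Section CellMass.
Variable R : realFieldType.
Implicit Types (x : nat -> R) (mu : R).

Lemma sum_nat_double (f : nat -> R) K :
  \sum_(0 <= k < 2 * K) f k = \sum_(0 <= i < K) (f (2 * i)%N + f (2 * i).+1).
Proof.
elim: K => [|K IH]; first by rewrite !big_geq.
by rewrite mulnS !big_nat_recr //= IH addrA.
Qed.

(* cell_mass p r is 3/h times the integral, over a cell of width h, of the square of the
   linear function with end values p and r; hence mass x mu N is 3N times the squared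
   L^2(0,1) distance from mu of the piecewise linear interpolant of x on N cells. *)
Definition cell_mass (p r : R) := p ^+ 2 + p * r + r ^+ 2.

Definition mass x mu N := \sum_(0 <= k < N) cell_mass (x k - mu) (x k.+1 - mu).

Lemma cell_mass_ge_sqr p r : p ^+ 2 <= 2 * cell_mass p r.
Proof. by rewrite /cell_mass; have := sqr_ge0 (p + r); have := sqr_ge0 r; nra. Qed.

Lemma mass_ge0 x mu N : 0 <= mass x mu N.
Proof.
apply: sumr_ge0 => k _; rewrite -(pmulr_rge0 _ (ltr0Sn _ 1)).
exact: le_trans (sqr_ge0 _) (cell_mass_ge_sqr _ _).
Qed.

Definition grid_mean x N := (\sum_(0 <= k < N.+1) x k) / N%:R.

Lemma mass_centered x N : (0 < N)%N -> x 0%N = 0 -> x N = 0 ->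
  N%:R / 3 * mass x (grid_mean x N) N
  = N%:R / 6 * (4 * \sum_(0 <= k < N.+1) x k ^+ 2
                + 2 * \sum_(0 <= k < N) x k * x k.+1) - (\sum_(0 <= k < N.+1) x k) ^+ 2.
Proof.
move=> N_gt0 x0 xN; set S := \sum_(0 <= k < N.+1) x k; set mu := grid_mean x N.
have N0 : N%:R != 0 :> R by rewrite pnatr_eq0 -lt0n.
have Q1a : \sum_(0 <= k < N) x k ^+ 2 = \sum_(0 <= k < N.+1) x k ^+ 2.
  by rewrite [RHS]big_nat_recr //= xN expr0n addr0.
have Q1b : \sum_(0 <= k < N) x k.+1 ^+ 2 = \sum_(0 <= k < N.+1) x k ^+ 2.
  by rewrite [RHS]big_nat_recl //= x0 expr0n add0r.
have Sa : \sum_(0 <= k < N) x k = S by rewrite /S big_nat_recr //= xN addr0.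
have Sb : \sum_(0 <= k < N) x k.+1 = S by rewrite /S big_nat_recl //= x0 add0r.
have -> : mass x mu N = \sum_(0 <= k < N) (x k ^+ 2 + x k.+1 ^+ 2 + x k * x k.+1
            - 3 * mu * x k - 3 * mu * x k.+1 + 3 * mu ^+ 2).
  by apply: eq_bigr => k _; rewrite /cell_mass; ring.
rewrite !big_split /= !sumrN -!mulr_sumr sumr_const_nat subn0 -mulr_natr.
by rewrite Q1a Q1b Sa Sb /mu /grid_mean -/S; field.
Qed.

Lemma midpoint_residual_le_mass x mu K :
  \sum_(0 <= i < K) (x (2 * i).+1 - (x (2 * i)%N + x (2 * i).+2) / 2) ^+ 2
  <= 2 * mass x mu (2 * K).
Proof.
rewrite /mass sum_nat_double mulr_sumr; apply: ler_sum => i _.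
set p := x (2 * i)%N - mu; set y := x (2 * i).+1 - mu; set r := x (2 * i).+2 - mu.
have -> : x (2 * i).+1 - (x (2 * i)%N + x (2 * i).+2) / 2 = y - (p + r) / 2.
  by rewrite /y /p /r; field.
have E : 2 * (cell_mass p y + cell_mass y r) - (y - (p + r) / 2) ^+ 2
         = 3 * ((p + r) / 2 + y) ^+ 2 + 4 * ((p - r) / 2) ^+ 2.
  by rewrite /cell_mass; field.
have := sqr_ge0 ((p + r) / 2 + y); have := sqr_ge0 ((p - r) / 2); lra.
Qed.

Lemma sqr_le_mass x mu N j : x 0%N = 0 -> (0 < j < N)%N -> x j ^+ 2 <= 4 * mass x mu N.
Proof.
move=> x0 /andP [j_gt0 j_ltN]; set v := fun k => x k - mu.
have sum_sqr : \sum_(0 <= k < N) v k ^+ 2 <= 2 * mass x mu N.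
  by rewrite /mass mulr_sumr; apply: ler_sum => k _; apply: cell_mass_ge_sqr.
have two_terms : v 0%N ^+ 2 + v j ^+ 2 <= \sum_(0 <= k < N) v k ^+ 2.
  rewrite big_mkord (bigD1 (Ordinal (ltn_trans j_gt0 j_ltN))) //= lerD2l.
  rewrite (bigD1 (Ordinal j_ltN)) ?(eqE, lt0n_neq0) //= lerDl.
  by apply: sumr_ge0 => k _; apply: sqr_ge0.
have -> : x j = v j - v 0%N by rewrite /v x0; ring.
have := sqr_ge0 (v j + v 0%N); lra.
Qed.

End CellMass.

Section ZeroExtension.
Variables (R : nmodType) (n : nat).
Implicit Type e : 'cV[R]_n.

(* The grid function of e with the zero exterior condition: zext e 0 = 0,
   zext e k = e_(k-1) for 0 < k <= n, and zext e k = 0 for k > n. *)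
Definition zext e (k : nat) : R := \sum_(i < n) (if i.+1 == k then e i 0 else 0).

Lemma zextS e (i : 'I_n) : zext e i.+1 = e i 0.
Proof.
rewrite /zext (bigD1 i) //= eqxx big1 ?addr0 // => j ji.
by rewrite eqSS ifN.
Qed.

Lemma zext0 e : zext e 0 = 0.
Proof. by rewrite /zext big1. Qed.

Lemma zext_gt e k : (n < k)%N -> zext e k = 0.
Proof.
move=> n_lt_k; rewrite /zext big1 // => i _.
by rewrite ifN //; have := ltn_ord i; lia.
Qed.

End ZeroExtension.

Section StiffnessForm.
Variables (R : realType) (q : nat).
Local Notation n := (2 ^ q - 1)%N.

Lemma succ_dim : n.+1 = (2 ^ q)%N.
Proof. by have := expn_gt0 2 q; lia. Qed.

Lemma Bh_mulmx (e : 'cV[R]_n) (i : 'I_n) :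
  (Bh R q *m e) i 0
  = n.+1%:R / 6 * (zext e i + 4 * zext e i.+1 + zext e i.+2) - \sum_j e j 0.
Proof.
rewrite mxE /zext mulr_sumr -!big_split /= mulr_sumr -sumrB; apply: eq_bigr => j _.
rewrite mxE succ_dim; change (i == j) with ((i : nat) == j).
case: ((i : nat) =P j) => ij; case: (i.+1 =P j) => i1j; case: (j.+1 =P i) => j1i;
  case: (j.+1 =P i.+1) => j1i1; case: (j.+1 =P i.+2) => j1i2 => /=;
  by [field | exfalso; lia].
Qed.

Lemma Bh_mass (e : 'cV[R]_n) :
  bform (Bh R q) e e = n.+1%:R / 3 * mass (zext e) (grid_mean (zext e) n.+1) n.+1.
Proof.
set x := zext e; set S := \sum_(0 <= k < n.+2) x k.
have x0 : x 0%N = 0 by apply: zext0.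
have xN : x n.+1 = 0 by apply: zext_gt.
rewrite mass_centered // -/S.
have reindex (F : nat -> R -> R) : \sum_(i < n) F i (e i 0) = \sum_(0 <= k < n) F k (x k.+1).
  by rewrite big_mkord; apply: eq_bigr => i _; rewrite /x zextS.
have lower (F : nat -> R) : F 0%N = 0 -> \sum_(0 <= k < n.+1) F k = \sum_(0 <= k < n) F k.+1.
  by move=> F0; rewrite big_nat_recl //= F0 add0r.
have upper (F : nat -> R) : F n.+1 = 0 -> \sum_(0 <= k < n.+2) F k = \sum_(0 <= k < n.+1) F k.
  by move=> FN; rewrite big_nat_recr //= FN addr0.
have Se : \sum_i e i 0 = S.
  by rewrite (reindex (fun _ y => y)) /S upper // lower.
set c := n.+1%:R / 6.
have -> : bform (Bh R q) e e
          = \sum_(0 <= k < n) x k.+1 * (c * (x k + 4 * x k.+1 + x k.+2) - S).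
  rewrite /bform -mulmxA mxE -(reindex (fun k y => y * (c * (x k + 4 * y + x k.+2) - S))).
  by apply: eq_bigr => i _; rewrite Bh_mulmx Se !mxE zextS.
have Q1 : \sum_(0 <= k < n) x k.+1 ^+ 2 = \sum_(0 <= k < n.+2) x k ^+ 2.
  by rewrite upper ?lower //= ?x0 ?xN expr0n.
have Q2l : \sum_(0 <= k < n) x k * x k.+1 = \sum_(0 <= k < n.+1) x k * x k.+1.
  by rewrite big_nat_recr //= xN mulr0 addr0.
have Q2r : \sum_(0 <= k < n) x k.+1 * x k.+2 = \sum_(0 <= k < n.+1) x k * x k.+1.
  by rewrite lower ?x0 ?mul0r.
have S1 : \sum_(0 <= k < n) x k.+1 = S by rewrite /S upper // lower.
have -> : \sum_(0 <= k < n) x k.+1 * (c * (x k + 4 * x k.+1 + x k.+2) - S)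
          = c * \sum_(0 <= k < n) x k * x k.+1 + 4 * c * \sum_(0 <= k < n) x k.+1 ^+ 2
            + c * \sum_(0 <= k < n) x k.+1 * x k.+2 - S * \sum_(0 <= k < n) x k.+1.
  by rewrite !mulr_sumr -!big_split /= -sumrB; apply: eq_bigr => k _; ring.
rewrite Q1 Q2l Q2r S1; ring.
Qed.

End StiffnessForm.

Section Prolongation.
Variables (R : realType) (q : nat).
Hypothesis q_gt0 : (0 < q)%N.
Local Notation n := (2 ^ q - 1)%N.
Local Notation m := (2 ^ q.-1 - 1)%N.

Lemma fine_dim : n = (2 * m).+1.
Proof. by have := expnS 2 q.-1; rewrite prednK //; have := expn_gt0 2 q.-1; lia. Qed.

(* At an odd fine index j this is c_((j-1)/2); at an even one it is the mean of the two
   neighbouring coarse values, counted as zero beyond the boundary. *)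
Lemma prol_mulmx (c : 'cV[R]_m) (j : 'I_n) :
  (prol R q *m c) j 0 = (zext c (j.+1 %/ 2) + zext c (j.+2 %/ 2)) / 2.
Proof.
rewrite mxE /zext -big_split /= mulr_suml; apply: eq_bigr => i _.
rewrite !mxE.
case: ((j : nat) =P 2 * i)%N => j0; case: ((j : nat) =P (2 * i).+1)%N => j1;
  case: ((j : nat) =P (2 * i).+2)%N => j2;
  case: (i.+1 =P j.+1 %/ 2)%N => d1; case: (i.+1 =P j.+2 %/ 2)%N => d2 => /=;
  by [field | exfalso; lia].
Qed.

Lemma prol_inj (c : 'cV[R]_m) : prol R q *m c = 0 -> c = 0.
Proof.
move=> Pc0; apply/matrixP => k l; rewrite (ord1 l) [RHS]mxE.
have k_lt : ((2 * k).+1 < n)%N by rewrite fine_dim; have := ltn_ord k; lia.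
have := congr1 (fun v : 'cV_n => v (Ordinal k_lt) 0) Pc0; rewrite prol_mulmx mxE /=.
have -> : ((2 * k).+2 %/ 2 = k.+1)%N by lia.
have -> : ((2 * k).+3 %/ 2 = k.+1)%N by lia.
by rewrite zextS; lra.
Qed.

Lemma zext_coarse (e : 'cV[R]_n) k :
  zext (\col_(i < m) zext e (2 * i).+2) k = zext e (2 * k).
Proof.
case: k => [|k]; first by rewrite !zext0.
have [k_lt | k_ge] := ltnP k m.
  rewrite [LHS](zextS _ (Ordinal k_lt)) mxE /=.
  by congr (zext e _); lia.
by rewrite !zext_gt // fine_dim; lia.
Qed.

Lemma coarse_residual (e : 'cV[R]_n) :
  let x := zext e in let c := \col_(i < m) x (2 * i).+2 in
  bform 1%:M (e - prol R q *m c) (e - prol R q *m c)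
  = \sum_(0 <= i < m.+1) (x (2 * i).+1 - (x (2 * i)%N + x (2 * i).+2) / 2) ^+ 2.
Proof.
move=> x c.
pose r j := x j.+1 - (x (2 * (j.+1 %/ 2))%N + x (2 * (j.+2 %/ 2))%N) / 2.
have r_odd i : r (2 * i).+1 = 0.
  rewrite /r; have [-> ->] : ((2 * i).+2 %/ 2 = i.+1)%N /\ ((2 * i).+3 %/ 2 = i.+1)%N by lia.
  by rewrite (_ : 2 * i.+1 = (2 * i).+2)%N; [field | lia].
have -> : bform 1%:M (e - prol R q *m c) (e - prol R q *m c) = \sum_(0 <= j < n) r j ^+ 2.
  rewrite bform1E big_mkord; apply: eq_bigr => j _.
  have -> : (e - prol R q *m c) j 0 = e j 0 - (prol R q *m c) j 0 by rewrite !mxE.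
  by rewrite -expr2 prol_mulmx !zext_coarse /r /x zextS.
have -> : \sum_(0 <= j < n) r j ^+ 2 = \sum_(0 <= j < 2 * m.+1) r j ^+ 2.
  rewrite fine_dim (_ : 2 * m.+1 = (2 * m).+2)%N; last lia.
  by rewrite [RHS]big_nat_recr //= r_odd expr0n addr0.
rewrite sum_nat_double; apply: eq_bigr => i _.
rewrite r_odd expr0n addr0 /r.
by have [-> ->] : ((2 * i).+1 %/ 2 = i)%N /\ (2 * ((2 * i).+2 %/ 2) = (2 * i).+2)%N by lia.
Qed.

End Prolongation.

Section ModelProblem.
Variables (R : realType) (q : nat) (b : R).
Local Notation n := (2 ^ q - 1)%N.
Local Notation h := (b / (2 ^ q)%:R).

Lemma Aq_sym : (Aq q b)^T = Aq q b.
Proof.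
by apply/matrixP => i j; rewrite !mxE eq_sym [(j.+1 == i)%N || _]orbC.
Qed.

Lemma Aq_mass (e : 'cV[R]_n) :
  bform (Aq q b) e e = h ^+ 2 * (n.+1%:R / 3 * mass (zext e) (grid_mean (zext e) n.+1) n.+1).
Proof. by rewrite /Aq bformZM Bh_mass. Qed.

Lemma Aq_psd (e : 'cV[R]_n) : 0 <= bform (Aq q b) e e.
Proof.
rewrite Aq_mass mulr_ge0 ?sqr_ge0 // mulr_ge0 ?mass_ge0 //.
by rewrite divr_ge0.
Qed.

Lemma Aq_definite : 0 < b -> forall e : 'cV[R]_n, bform (Aq q b) e e = 0 -> e = 0.
Proof.
move=> b_gt0 e; set x := zext e.
have scale_gt0 : 0 < h ^+ 2 * (n.+1%:R / 3).
  by rewrite mulr_gt0 ?exprn_gt0 ?divr_gt0 ?ltr0n ?expn_gt0.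
rewrite Aq_mass mulrA => /eqP; rewrite mulf_eq0 (gt_eqF scale_gt0) /= => /eqP mass0.
apply/matrixP => i l; rewrite (ord1 l) mxE.
have := @sqr_le_mass R x (grid_mean x n.+1) n.+1 i.+1 (zext0 e).
rewrite mass0 mulr0 /x zextS => /(_ (ltn_ord i)) ?.
by apply/eqP; rewrite -sqrf_eq0 eq_le sqr_ge0 andbT.
Qed.

Lemma diagpart_Aq : diagpart (Aq q b) = (h ^+ 2 * (2 * (2 ^ q)%:R / 3 - 1))%:M.
Proof.
apply/matrixP => i j; rewrite !mxE.
by have [] := eqVneq i j.
Qed.

Hypothesis q_gt0 : (0 < q)%N.

Lemma diag_Aq_gt0 : 0 < b -> 0 < h ^+ 2 * (2 * (2 ^ q)%:R / 3 - 1).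
Proof.
move=> b_gt0; rewrite mulr_gt0 ?exprn_gt0 ?divr_gt0 ?ltr0n ?expn_gt0 //.
have : (2 <= 2 ^ q)%N by rewrite -[X in (X <= _)%N]expn1 leq_pexp2l.
rewrite -(ler_nat R); lra.
Qed.

Lemma Aq_approximation (e : 'cV[R]_n) : exists c,
  h ^+ 2 * (2 * (2 ^ q)%:R / 3 - 1) * bform 1%:M (e - prol R q *m c) (e - prol R q *m c)
  <= 4 * bform (Aq q b) e e.
Proof.
exists (\col_i zext e (2 * i).+2).
rewrite coarse_residual // Aq_mass (_ : n.+1%:R = (2 ^ q)%:R); last by rewrite succ_dim.
set S := \sum_(0 <= i < _) _; set M := mass _ _ _; set N := (2 ^ q)%:R.
have S_le : S <= 2 * M.
  have := midpoint_residual_le_mass (zext e) (grid_mean (zext e) n.+1) (2 ^ q.-1 - 1).+1.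
  by have -> : (2 * (2 ^ q.-1 - 1).+1 = n.+1)%N by rewrite (fine_dim q_gt0); lia.
have S_ge0 : 0 <= S by apply: sumr_ge0 => i _; apply: sqr_ge0.
have : N / 3 * S <= N / 3 * (2 * M) by rewrite ler_wpM2l ?divr_ge0.
move=> NS; rewrite -mulrA (mulrCA 4) ler_wpM2l ?sqr_ge0 //; lra.
Qed.

End ModelProblem.

Theorem theorem4p5 (R : realType) (q : nat) (b eta0 omega eta : R) :
  (2 <= q)%N -> 0 < b ->
  (* lambda_max (D_q^{-1} A_q) <= eta0 : every eigenvalue is <= eta0 *)
  (forall lam : R, eigenvalue (invmx (diagpart (Aq q b)) *m Aq q b) lam -> lam <= eta0) ->
  eta0 < 3 ->
  0 < omega -> omega < 2 / eta0 ->
  0 < eta -> eta <= omega * (2 - omega * eta0) ->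
  (forall nu : 'cV[R]_(2 ^ q - 1),
      mnorm (Aq q b) (Kq q b omega *m nu) ^+ 2
      <= mnorm (Aq q b) nu ^+ 2
         - eta * mnorm (invmx (diagpart (Aq q b))) (Aq q b *m nu) ^+ 2)
  /\ opnorm (Aq q b) (Kq q b omega *m Tq q b) <= Num.sqrt (1 - eta / 4)
  /\ Num.sqrt (1 - eta / 4) < 1.
Proof.
move=> q_ge2 b_gt0 eigen_le _ omega_gt0 _ eta_gt0 eta_le.
have q_gt0 : (0 < q)%N by apply: leq_trans q_ge2.
have n_gt0 : (0 < 2 ^ q - 1)%N.
  by rewrite subn_gt0 -[X in (X < _)%N](expn0 2) ltn_exp2l // -lt0n.
exact: (two_grid_convergence n_gt0 (Aq_sym q b) (@Aq_psd R q b) (Aq_definite b_gt0)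
  (diag_Aq_gt0 q_gt0 b_gt0) (diagpart_Aq q b) eigen_le omega_gt0 eta_gt0 eta_le
  (@prol_inj R q q_gt0) (@Aq_approximation R q b q_gt0)).
Qed.
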